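(* Let $(T,C,K,R)$ be an interval knapsack covering instance, $y\in[0,1]^T$, $S^+=\{s\in[T]:y_s=1\}$, and $\tilde R_{a,b}:=\max\{R_{a,b}-C(S^+\cap(a,b]),0\}$ for every interval $(a,b]$ over $[T]$. Assume that for every interval $(a,b]$ with $\tilde R_{a,b}>0$, either $\sum_{s\in(a,b]\setminus S^+}\min\{C_s,\tilde R_{a,b}\}y_s\ge10\tilde R_{a,b}$ or $\sum_{s\in(a,b]\setminus S^+:C_s\ge\tilde R_{a,b}}y_s\ge6$. For every interval $(a,b]$ define $$\tilde R'_{a,b}:=\sup\Big\{W\ge0:\ \sum_{s\in(a,b]\setminus S^+}\min\{C_s,W\}y_s\ge2W\ \text{ or }\ \sum_{s\in(a,b]\setminus S^+:C_s\ge W}y_s\ge1\Big\}.$$ Construct a family $\mathcal S$ of intervals by the recursive procedure $P(a,b)$ started as $P(0,T)$ with $\mathcal S=\emptyset$: $P(a,b)$ adds $(a,b]$ to $\mathcal S$, and if $a+1<b$ it picks some $c\in(a,b)$ maximizing $\min\{\tilde R'_{a,c},\tilde R'_{c,b}\}$ and calls $P(a,c)$ and $P(c,b)$. Then for every interval $(a,b]$ with $\tilde R_{a,b}>0$ there exists $(a',b']\in\mathcal S$ with $(a',b']\subseteq(a,b]$ and $\tilde R'_{a',b'}\ge\tilde R_{a,b}$.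
   Context: For integers $a<b$, $(a,b]$ denotes the set of integers $\{a+1,\dots,b\}$; an interval over $[T]$ is $(a,b]$ with integers $0\le a<b\le T$. For $S\subseteq[T]$, $C(S)=\sum_{s\in S}C_s$. An interval knapsack covering instance $(T,C,K,R)$ consists of knapsacks $[T]$, each $s$ with capacity $C_s>0$ and cost $K_s\ge0$, and a requirement $R_{a,b}\ge0$ for every interval $(a,b]$ over $[T]$. *)

From HB Require Import structures.
From mathcomp Require Import all_boot all_order all_algebra.
From mathcomp Require Import boolp classical_sets reals.
Set Implicit Arguments. Unset Strict Implicit. Unset Printing Implicit Defensive.
Import Order.TTheory GRing.Theory Num.Theory.
Local Open Scope ring_scope.
Local Open Scope classical_set_scope.

(* Knapsacks are s = 1..T; C s capacity, y s fractional value.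
   S^+ = {s : y s = 1}.  The interval (a,b] is {a+1,...,b}. *)

Definition capSplus {R : realType} (C y : nat -> R) (a b : nat) : R :=
  \sum_(a.+1 <= s < b.+1 | y s == 1) C s.

Definition Rtilde {R : realType} (C y : nat -> R) (Req : nat -> nat -> R)
  (a b : nat) : R :=
  Num.max (Req a b - capSplus C y a b) 0.

Definition truncsum {R : realType} (C y : nat -> R) (a b : nat) (W : R) : R :=
  \sum_(a.+1 <= s < b.+1 | y s != 1) Num.min (C s) W * y s.

Definition bigsum {R : realType} (C y : nat -> R) (a b : nat) (W : R) : R :=
  \sum_(a.+1 <= s < b.+1 | (y s != 1) && (W <= C s)) y s.

Definition Rtilde' {R : realType} (C y : nat -> R) (a b : nat) : R :=
  sup [set W : R | 0 <= W /\
         (2 * W <= truncsum C y a b W \/ 1 <= bigsum C y a b W)].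

(* The family S produced by P(0,T), where ch a b is the split point chosen
   by the call P(a,b). *)
Inductive inS (T : nat) (ch : nat -> nat -> nat) : nat -> nat -> Prop :=
| inS_root : inS T ch 0 T
| inS_left : forall a b, inS T ch a b -> (a.+1 < b)%N -> inS T ch a (ch a b)
| inS_right : forall a b, inS T ch a b -> (a.+1 < b)%N -> inS T ch (ch a b) b.

(* Fix W = Rtilde(a,b) > 0 and call (x,z] W-admissible when W belongs to the
   set whose supremum is Rtilde'(x,z); then Rtilde'(x,z) >= W, and
   admissibility survives enlarging the interval.  Let (p,q] be the smallest
   node of the split tree containing (a,b].  If it is (a,b] itself, the mass
   hypothesis makes it admissible.  Otherwise its split point c lies strictly
   inside (a,b], and one of (a,c], (c,b] carries at least half of the mass
   (5W of truncated capacity, or 3 of fractional value).  As one knapsack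
   contributes at most W, resp. 1, that half splits into two adjacent
   admissible intervals (a,m], (m,c], say.  Now walk down the right spine of
   the node (p,c]: while a node starts left of a, both (start,m] and (m,c] are
   admissible, so by maximality of the chosen split both of its children have
   Rtilde' >= W; the first right child starting at or after a is the node
   sought. *)

From HB Require Import structures.
From mathcomp Require Import all_boot all_order all_algebra.
From mathcomp Require Import boolp classical_sets reals.
From mathcomp Require Import zify lra.
Import Order.TTheory GRing.Theory Num.Theory.
Local Open Scope ring_scope.
Set Implicit Arguments. Unset Strict Implicit. Unset Printing Implicit Defensive.

Section PartialSums.
Variable R : realDomainType.
Variable T : nat.
Variable P : pred nat.
Variable F : nat -> R.
Hypothesis F_ge0 : forall s, (1 <= s <= T)%N -> P s -> 0 <= F s.

Definition psum x z := \sum_(x.+1 <= s < z.+1 | P s) F s.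

Lemma psum_id x : psum x x = 0.
Proof. by rewrite /psum big_geq. Qed.

Lemma psum_cat x m z : (x <= m <= z)%N -> psum x z = psum x m + psum m z.
Proof. by move=> /andP[xm mz]; rewrite /psum (big_cat_nat _ (n := m.+1)). Qed.

Lemma psumSr x z : (x <= z)%N ->
  psum x z.+1 = psum x z + (if P z.+1 then F z.+1 else 0).
Proof. by move=> xz; rewrite /psum big_mkcond big_nat_recr //= -big_mkcond. Qed.

Lemma psum_ge0 x z : (z <= T)%N -> 0 <= psum x z.
Proof.
move=> zT; rewrite /psum big_seq_cond; apply: sumr_ge0 => s.
by rewrite mem_index_iota => /andP[/andP[xs sz] Ps]; apply: F_ge0 => //; lia.
Qed.

Lemma psum_widen x z x' z' : (x' <= x <= z)%N -> (z <= z' <= T)%N ->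
  psum x z <= psum x' z'.
Proof.
move=> /andP[x'x xz] /andP[zz' z'T].
rewrite (@psum_cat x' x z') ?(@psum_cat x z z'); try lia.
have : 0 <= psum x' x by apply: psum_ge0; lia.
have : 0 <= psum z z' by apply: psum_ge0.
lra.
Qed.

(* Cut at the least [m] with [t <= psum x m]: that prefix is below [t + u],
   which leaves at least [t] for the suffix. *)
Lemma psum_bisect x z (t u : R) : 0 < t -> 0 <= u -> (z <= T)%N ->
    (forall s, (1 <= s <= T)%N -> P s -> F s <= u) -> t + u + t <= psum x z ->
  exists m, [/\ (x < m < z)%N, t <= psum x m & t <= psum m z].
Proof.
move=> t_gt0 u_ge0 zT F_le_u big.
have xz : (x <= z)%N.
  rewrite leqNgt; apply/negP => zx.
  by move: big; rewrite /psum big_geq; [lra | lia].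
have reach : exists m, (x <= m <= z)%N && (t <= psum x m).
  by exists z; rewrite xz leqnn /=; lra.
case: (ex_minnP reach) => m /andP[/andP[xm mz] tm] m_min.
have x_lt_m : (x < m)%N by case: ltngtP xm tm => // <-; rewrite psum_id; lra.
have [m' def_m] : exists m', m = m'.+1 by exists m.-1; lia.
have below : psum x m' < t.
  by rewrite ltNge; apply/negP => tm'; have := m_min m'; rewrite tm' andbT; lia.
have last_term : psum x m <= psum x m' + u.
  rewrite def_m psumSr; last lia.
  by case: ifP => Pm; rewrite lerD2l //; apply: F_le_u => //; lia.
rewrite (@psum_cat x m z) ?xm // in big.
have m_lt_z : (m < z)%N.
  rewrite ltn_neqAle mz andbT; apply/eqP => eq_mz.
  by rewrite -eq_mz psum_id in big; lra.
by exists m; split => //; [rewrite x_lt_m | lra].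
Qed.

End PartialSums.

Section Knapsacks.
Variable R : realType.
Variable T : nat.
Variables C y : nat -> R.
Hypothesis C_gt0 : forall s, (1 <= s <= T)%N -> 0 < C s.
Hypothesis y_01 : forall s, (1 <= s <= T)%N -> 0 <= y s <= 1.

Definition admissible x z W :=
  2 * W <= truncsum C y x z W \/ 1 <= bigsum C y x z W.

Definition heavy x z W :=
  10 * W <= truncsum C y x z W \/ 6 <= bigsum C y x z W.

Definition admissible_split x z W :=
  exists m, [/\ (x < m < z)%N, admissible x m W & admissible m z W].

Lemma min_cap_ge0 W s : 0 <= W -> (1 <= s <= T)%N -> 0 <= Num.min (C s) W.
Proof. by move=> W0 sT; rewrite le_min W0 ltW ?C_gt0. Qed.

Lemma truncsum_term_ge0 W s : 0 <= W -> (1 <= s <= T)%N ->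
  0 <= Num.min (C s) W * y s.
Proof.
move=> W0 sT; have /andP[y0 _] := y_01 sT.
by rewrite mulr_ge0 ?min_cap_ge0.
Qed.

Lemma truncsum_term_le W s : 0 <= W -> (1 <= s <= T)%N ->
  Num.min (C s) W * y s <= Num.min (C s) W.
Proof.
move=> W0 sT; have /andP[y0 y1] := y_01 sT.
by rewrite ler_piMr ?min_cap_ge0.
Qed.

Lemma truncsum_widen W x z x' z' : 0 <= W ->
    (x' <= x <= z)%N -> (z <= z' <= T)%N ->
  truncsum C y x z W <= truncsum C y x' z' W.
Proof. by move=> W0; apply: psum_widen => s sT _; apply: truncsum_term_ge0. Qed.

Lemma bigsum_widen W x z x' z' : (x' <= x <= z)%N -> (z <= z' <= T)%N ->
  bigsum C y x z W <= bigsum C y x' z' W.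
Proof. by apply: psum_widen => s sT _; have /andP[] := y_01 sT. Qed.

Lemma admissible_widen W x z x' z' : 0 <= W ->
    (x' <= x <= z)%N -> (z <= z' <= T)%N ->
  admissible x z W -> admissible x' z' W.
Proof.
move=> W0 xx' zz' [trunc|big]; [left | right].
  exact: le_trans trunc (truncsum_widen W0 xx' zz').
exact: le_trans big (bigsum_widen W xx' zz').
Qed.

Lemma truncsum_le_capacity V x z : 0 <= V -> (z <= T)%N ->
  truncsum C y x z V <= \sum_(x.+1 <= s < z.+1) C s.
Proof.
move=> V0 zT; rewrite /truncsum big_mkcond /=; apply: ler_sum_nat => s xsz.
have sT : (1 <= s <= T)%N by lia.
case: ifP => _; last exact/ltW/C_gt0.
by apply: le_trans (truncsum_term_le V0 sT) _; rewrite ge_min lexx.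
Qed.

Lemma bigsum_scale_le_capacity V x z : 0 <= V -> (z <= T)%N ->
  V * bigsum C y x z V <= \sum_(x.+1 <= s < z.+1) C s.
Proof.
move=> V0 zT; rewrite /bigsum mulr_sumr big_mkcond /=.
apply: ler_sum_nat => s xsz; have sT : (1 <= s <= T)%N by lia.
have C0 := C_gt0 sT; have /andP[y0 y1] := y_01 sT.
by case: ifP => [/andP[_ VC]|_]; [nra | exact: ltW].
Qed.

Lemma le_Rtilde' x z W : (z <= T)%N -> 0 <= W -> admissible x z W ->
  W <= Rtilde' C y x z.
Proof.
move=> zT W0 adm; apply: ub_le_sup; last by split.
exists (\sum_(x.+1 <= s < z.+1) C s) => V [V0 [trunc|big]].
  by have := truncsum_le_capacity x V0 zT; lra.
by have := bigsum_scale_le_capacity x V0 zT; nra.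
Qed.

Lemma admissible_split_truncsum x z W : 0 < W -> (z <= T)%N ->
  5 * W <= truncsum C y x z W -> admissible_split x z W.
Proof.
move=> W_gt0 zT mass; have W0 := ltW W_gt0.
have term_le s : (1 <= s <= T)%N -> y s != 1 -> Num.min (C s) W * y s <= W.
  move=> sT _; apply: le_trans (truncsum_term_le W0 sT) _.
  by rewrite ge_min lexx orbT.
have [||m [xmz l r]] := psum_bisect (x := x) (t := 2 * W) _ W0 zT term_le.
- by rewrite pmulr_rgt0.
- by apply: le_trans mass; lra.
- by exists m; split => //; left.
Qed.

Lemma admissible_split_bigsum x z W : (z <= T)%N ->
  3 <= bigsum C y x z W -> admissible_split x z W.
Proof.
move=> zT mass.
have term_le s : (1 <= s <= T)%N -> (y s != 1) && (W <= C s) -> y s <= 1.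
  by move=> sT _; have /andP[] := y_01 sT.
have [||m [xmz l r]] := psum_bisect (x := x) (t := 1) _ ler01 zT term_le.
- exact: ltr01.
- by apply: le_trans mass; lra.
- by exists m; split => //; right.
Qed.

Lemma heavy_split a c b W : 0 < W -> (a < c < b)%N -> (b <= T)%N ->
  heavy a b W -> admissible_split a c W \/ admissible_split c b W.
Proof.
move=> W_gt0 acb bT; have W0 := ltW W_gt0; have cT : (c <= T)%N by lia.
have ac_cb : (a <= c <= b)%N by lia.
have trunc_cat : truncsum C y a b W = truncsum C y a c W + truncsum C y c b W.
  exact: psum_cat.
have big_cat : bigsum C y a b W = bigsum C y a c W + bigsum C y c b W.
  exact: psum_cat.
rewrite /heavy trunc_cat big_cat => -[trunc|big].
- have [half|half] := lerP (5 * W) (truncsum C y a c W).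
    by left; apply: admissible_split_truncsum.
  by right; apply: admissible_split_truncsum => //; lra.
- have [half|half] := lerP 3 (bigsum C y a c W).
    by left; apply: admissible_split_bigsum.
  by right; apply: admissible_split_bigsum => //; lra.
Qed.

Variable ch : nat -> nat -> nat.
Hypothesis ch_max : forall a b, (a.+1 < b <= T)%N ->
  (a < ch a b < b)%N /\
  (forall c, (a < c < b)%N ->
     Num.min (Rtilde' C y a c) (Rtilde' C y c b) <=
     Num.min (Rtilde' C y a (ch a b)) (Rtilde' C y (ch a b) b)).
Hypothesis T_gt0 : (0 < T)%N.

Definition node_within W a b := exists a' b', inS T ch a' b' /\
  (a <= a')%N /\ (b' <= b)%N /\ W <= Rtilde' C y a' b'.

Lemma node_within_widen W a b a0 b0 : (a <= a0)%N -> (b0 <= b)%N ->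
  node_within W a0 b0 -> node_within W a b.
Proof.
move=> aa0 b0b [a' [b' [S' [a0a' [b'b0 W_le]]]]].
by exists a', b'; do !split => //; lia.
Qed.

Lemma inS_bound p q : inS T ch p q -> (p < q <= T)%N.
Proof.
elim=> [|a b _ abT ab|a b _ abT ab]; first by rewrite T_gt0 leqnn.
all: by have [/andP[ac cb] _] := ch_max (a := a) (b := b) (ltac:(lia)); lia.
Qed.

Lemma inS_split p q : inS T ch p q -> (p.+1 < q)%N ->
  [/\ (p < ch p q < q)%N, inS T ch p (ch p q) & inS T ch (ch p q) q].
Proof.
move=> pq_S pq; have /andP[_ qT] := inS_bound pq_S.
have [pcq _] := ch_max (a := p) (b := q) (ltac:(lia)).
by split => //; constructor.
Qed.

Lemma le_Rtilde'_children p q m W : (p < m < q)%N -> (q <= T)%N ->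
    W <= Rtilde' C y p m -> W <= Rtilde' C y m q ->
  W <= Rtilde' C y p (ch p q) /\ W <= Rtilde' C y (ch p q) q.
Proof.
move=> pmq qT W_pm W_mq.
have [_ ch_ge] := ch_max (a := p) (b := q) (ltac:(lia)).
have W_min : W <= Num.min (Rtilde' C y p m) (Rtilde' C y m q).
  by rewrite le_min W_pm.
by move: (le_trans W_min (ch_ge m pmq)); rewrite le_min => /andP[].
Qed.

Lemma node_within_suffix p q a W : 0 <= W -> inS T ch p q -> (p <= a)%N ->
  admissible_split a q W -> node_within W a q.
Proof.
move=> W0; have [n] := ubnP (q - p); elim: n p => // n IH p qp pq_S pa.
move=> [m [/andP[am mq] adm_am adm_mq]].
have /andP[pq qT] := inS_bound pq_S.
have W_mq : W <= Rtilde' C y m q by apply: le_Rtilde'.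
have [ap|p_lt_a] := leqP a p.
  exists p, q; do !split => //; apply: le_Rtilde' => //.
  by apply: admissible_widen adm_mq; lia.
have W_pm : W <= Rtilde' C y p m.
  by apply: le_Rtilde'; [lia | | apply: admissible_widen adm_am]; lia.
have [/andP[pc cq] _ Sr] := inS_split pq_S (ltac:(lia)).
have [_ W_cq] := le_Rtilde'_children (ltac:(lia) : (p < m < q)%N) qT W_pm W_mq.
have [ac|ca] := leqP a (ch p q); first by exists (ch p q), q.
by apply: (IH (ch p q)) => //; [lia | lia | exists m; split => //; lia].
Qed.

Lemma node_within_prefix p q b W : 0 <= W -> inS T ch p q -> (b <= q)%N ->
  admissible_split p b W -> node_within W p b.
Proof.
move=> W0; have [n] := ubnP (q - p); elim: n q => // n IH q qp pq_S bq.
move=> [m [/andP[pm mb] adm_pm adm_mb]].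
have /andP[pq qT] := inS_bound pq_S.
have W_pm : W <= Rtilde' C y p m by apply: le_Rtilde' => //; lia.
have [qb|b_lt_q] := leqP q b.
  exists p, q; do !split => //; apply: le_Rtilde' => //.
  by apply: admissible_widen adm_pm; lia.
have W_mq : W <= Rtilde' C y m q.
  by apply: le_Rtilde'; [lia | | apply: admissible_widen adm_mb]; lia.
have [/andP[pc cq] Sl _] := inS_split pq_S (ltac:(lia)).
have [W_pc _] := le_Rtilde'_children (ltac:(lia) : (p < m < q)%N) qT W_pm W_mq.
have [cb|bc] := leqP (ch p q) b; first by exists p, (ch p q).
by apply: (IH (ch p q)) => //; [lia | lia | exists m; split => //; lia].
Qed.

Lemma enclosing_node p q a b : inS T ch p q -> (p <= a)%N -> (a < b <= q)%N ->
  exists p' q', [/\ inS T ch p' q', (p' <= a)%N, (b <= q')%N &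
    (p' = a /\ q' = b) \/ (a < ch p' q' < b)%N].
Proof.
have [n] := ubnP (q - p); elim: n p q => // n IH p q qp pq_S pa /andP[ab bq].
have [/andP[/eqP pa' /eqP qb] | not_ab] := boolP ((p == a) && (q == b)).
  by exists p, q; split => //; left.
have pq : (p.+1 < q)%N by move: not_ab; rewrite negb_and => /orP[] /eqP; lia.
have [/andP[pc cq] Sl Sr] := inS_split pq_S pq.
have [ca|ac] := leqP (ch p q) a; first by apply: (IH (ch p q) q) => //; lia.
have [bc|cb] := leqP b (ch p q); first by apply: (IH p (ch p q)) => //; lia.
by exists p, q; split => //; right; rewrite ac.
Qed.

Lemma node_within_heavy a b W : 0 < W -> (a < b <= T)%N -> heavy a b W ->
  node_within W a b.
Proof.
move=> W_gt0 abT mass; have W0 := ltW W_gt0.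
have [p [q [pq_S pa bq [[eq_pa eq_qb]|acb]]]] :=
  enclosing_node (inS_root T ch) (leq0n a) abT.
  subst p q; exists a, b; do !split => //; apply: le_Rtilde' => //; first lia.
  by case: mass => [trunc|big]; [left | right]; lra.
have /andP[_ qT] := inS_bound pq_S.
have [_ Sl Sr] := inS_split pq_S (ltac:(lia)).
have [left_split|right_split] := heavy_split W_gt0 acb (ltac:(lia)) mass.
  by apply: node_within_widen (node_within_suffix W0 Sl pa left_split) => //; lia.
by apply: node_within_widen (node_within_prefix W0 Sr bq right_split) => //; lia.
Qed.

End Knapsacks.

Theorem lemma6 (R : realType) (T : nat) (C K : nat -> R)
  (Req : nat -> nat -> R) (y : nat -> R) (ch : nat -> nat -> nat) :
  (forall s, (1 <= s <= T)%N -> 0 < C s) ->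
  (forall s, (1 <= s <= T)%N -> 0 <= K s) ->
  (forall a b, (a < b <= T)%N -> 0 <= Req a b) ->
  (forall s, (1 <= s <= T)%N -> 0 <= y s <= 1) ->
  (forall a b, (a < b <= T)%N -> 0 < Rtilde C y Req a b ->
     10 * Rtilde C y Req a b <= truncsum C y a b (Rtilde C y Req a b) \/
     6 <= bigsum C y a b (Rtilde C y Req a b)) ->
  (forall a b, (a.+1 < b <= T)%N ->
     (a < ch a b < b)%N /\
     (forall c, (a < c < b)%N ->
        Num.min (Rtilde' C y a c) (Rtilde' C y c b) <=
        Num.min (Rtilde' C y a (ch a b)) (Rtilde' C y (ch a b) b))) ->
  forall a b, (a < b <= T)%N -> 0 < Rtilde C y Req a b ->
    exists a' b', inS T ch a' b' /\ (a <= a')%N /\ (b' <= b)%N /\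
      Rtilde C y Req a b <= Rtilde' C y a' b'.
Proof.
move=> C_gt0 _ _ y_01 heavy_Rtilde ch_max a b abT R_gt0.
apply: (node_within_heavy C_gt0 y_01 ch_max) => //; first lia.
exact: heavy_Rtilde.
Qed.
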